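(* In the linear setting of the context, let $(\mathbf c(t),v(t),\phi(t))$ be a solution of the linear pump-leak system. Then $$\frac{d\tilde G}{dt}=-J,\qquad J=\langle\boldsymbol\mu+\mathbf q,L(\boldsymbol\mu+\mathbf q)\rangle_{\mathbb R^N}+\zeta\pi_{\rm w}^2=\langle\boldsymbol\gamma+\mathbf q,\hat L(\boldsymbol\gamma+\mathbf q)\rangle_{\mathbb R^N}+\zeta\pi_{\rm w}^2,$$ where $$\tilde G(\mathbf c,v)=v\sum_{k=1}^N\Big(c_k\big(\ln(c_k/c_k^{\rm e})-1+q_k\big)+c_k^{\rm e}\Big)+A\Big(\ln\frac{A}{v}-1\Big).$$ In particular $\tilde G$ is non-increasing along solutions.
   Context: Fix an integer $N\ge2$, real valences $z_1,\dots,z_N$ not all zero, $\mathbf z=(z_1,\dots,z_N)^T$, positive constants $c_k^{\rm e}$ with $\sum_kz_kc_k^{\rm e}=0$, $A>0$, $z\in\mathbb R$. Let $L$ be a real symmetric positive definite $N\times N$ matrix, $\mathbf p\in\mathbb R^N$ constant, $\zeta>0$, $\mathbf q=L^{-1}\mathbf p$. For $\mathbf c\in(0,\infty)^N$, $v>0$, $\phi\in\mathbb R$: $\gamma_k=\ln(c_k/c_k^{\rm e})$, $\boldsymbol\gamma=(\gamma_k)$, $\mu_k=\gamma_k+z_k\phi$, $\pi_{\rm w}=\sum_kc_k^{\rm e}-(\sum_kc_k+A/v)$. The linear pump-leak system is $\frac{d}{dt}(v\mathbf c)=-L\boldsymbol\mu-\mathbf p$, $0=\sum_kz_kc_k+zA/v$,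 $\frac{dv}{dt}=-\zeta\pi_{\rm w}$; a solution is a triple with $\mathbf c(t)\in(0,\infty)^N$, $v(t)>0$ of class $C^1$ and $\phi(t)$ continuous satisfying these equations. $\hat L$ is the $N\times N$ matrix $\hat L=L-\frac{(L\mathbf z)(L\mathbf z)^T}{\langle\mathbf z,L\mathbf z\rangle}$. (Along solutions, the electroneutrality constraint forces $\phi=-\langle\mathbf z,L\boldsymbol\gamma+\mathbf p\rangle/\langle\mathbf z,L\mathbf z\rangle$.) *)

From Stdlib Require Import Reals Lra.
Open Scope R_scope.

(* Vectors in R^N are functions nat -> R (only indices 0..N-1 matter);
   N x N matrices are functions nat -> nat -> R. *)

Fixpoint sumN (n : nat) (f : nat -> R) : R :=
  match n with
  | O => 0
  | S m => sumN m f + f m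
  end.

Definition dot (N : nat) (x y : nat -> R) : R := sumN N (fun k => x k * y k).

Definition matvec (N : nat) (M : nat -> nat -> R) (x : nat -> R) : nat -> R :=
  fun i => sumN N (fun j => M i j * x j).

Definition symmetric (N : nat) (M : nat -> nat -> R) : Prop :=
  forall i j, (i < N)%nat -> (j < N)%nat -> M i j = M j i.

Definition pos_def (N : nat) (M : nat -> nat -> R) : Prop :=
  forall x : nat -> R, (exists i, (i < N)%nat /\ x i <> 0) ->
    0 < dot N x (matvec N M x).

Definition Lhat (N : nat) (L : nat -> nat -> R) (z : nat -> R) : nat -> nat -> R :=
  fun i j => L i j - matvec N L z i * matvec N L z j / dot N z (matvec N L z).

Definition gam (ce c : nat -> R) : nat -> R := fun k => ln (c k / ce k).

Definition mu (ce c z : nat -> R) (phi : R) : nat -> R :=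
  fun k => gam ce c k + z k * phi.

Definition piw (N : nat) (ce c : nat -> R) (A v : R) : R :=
  sumN N ce - (sumN N c + A / v).

Definition Gtilde (N : nat) (ce q : nat -> R) (A : R) (c : nat -> R) (v : R) : R :=
  v * sumN N (fun k => c k * (ln (c k / ce k) - 1 + q k) + ce k)
  + A * (ln (A / v) - 1).

Definition vadd (x y : nat -> R) : nat -> R := fun k => x k + y k.

(* Along a solution, \tilde G changes at the rate
   <J, gamma + q> + v' pi_w, where J_k = (v c_k)' is the flux.
   In the linear model J = -L(mu + q), and electroneutrality makes the total
   charge of the cell constant, so <z, J> = 0; writing gamma + q = (mu + q) - phi z
   gives \tilde G' = -<mu + q, L (mu + q)> - zeta pi_w^2 <= 0.  The same orthogonality
   <z, L (mu + q)> = 0 shows that the quadratic form of \hat L, which kills the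
   direction z, takes the same value on gamma + q as L on mu + q. *)

From Stdlib Require Import Reals Lra Lia Classical.
Open Scope R_scope.

Lemma sumN_ext n f g :
  (forall k, (k < n)%nat -> f k = g k) -> sumN n f = sumN n g.
Proof.
  induction n as [|n IH]; intros H; simpl; [reflexivity|].
  rewrite IH by (intros; apply H; lia). rewrite H by lia. reflexivity.
Qed.

Lemma sumN_add n f g : sumN n (fun k => f k + g k) = sumN n f + sumN n g.
Proof. induction n as [|n IH]; simpl; [ring|]. rewrite IH. ring. Qed.

Lemma sumN_scal n a f : sumN n (fun k => a * f k) = a * sumN n f.
Proof. induction n as [|n IH]; simpl; [ring|]. rewrite IH. ring. Qed.

Lemma sumN_zero n : sumN n (fun _ => 0) = 0.
Proof. induction n as [|n IH]; simpl; [reflexivity|]. rewrite IH. ring. Qed.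

Lemma sumN_swap n m (f : nat -> nat -> R) :
  sumN n (fun i => sumN m (fun j => f i j)) = sumN m (fun j => sumN n (fun i => f i j)).
Proof.
  induction n as [|n IH]; simpl.
  - symmetry. apply sumN_zero.
  - rewrite IH, <- sumN_add. reflexivity.
Qed.

Lemma dot_comm N x y : dot N x y = dot N y x.
Proof. apply sumN_ext. intros. ring. Qed.

Lemma dot_extl N x x' y :
  (forall k, (k < N)%nat -> x k = x' k) -> dot N x y = dot N x' y.
Proof. intros H. apply sumN_ext. intros k Hk. rewrite H by exact Hk. reflexivity. Qed.

Lemma dot_extr N x y y' :
  (forall k, (k < N)%nat -> y k = y' k) -> dot N x y = dot N x y'.
Proof. intros H. apply sumN_ext. intros k Hk. rewrite H by exact Hk. reflexivity. Qed.

Lemma dot_linl N a b x y w :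
  dot N (fun k => a * x k + b * y k) w = a * dot N x w + b * dot N y w.
Proof.
  unfold dot. rewrite <- !sumN_scal, <- sumN_add. apply sumN_ext. intros. ring.
Qed.

Lemma dot_linr N a b w x y :
  dot N w (fun k => a * x k + b * y k) = a * dot N w x + b * dot N w y.
Proof. rewrite dot_comm, dot_linl, !(dot_comm N w). reflexivity. Qed.

Lemma matvec_ext N M x x' i :
  (forall k, (k < N)%nat -> x k = x' k) -> matvec N M x i = matvec N M x' i.
Proof. intros H. apply sumN_ext. intros k Hk. rewrite H by exact Hk. reflexivity. Qed.

Lemma matvec_lin N M a b x y i :
  matvec N M (fun k => a * x k + b * y k) i = a * matvec N M x i + b * matvec N M y i.
Proof.
  unfold matvec. rewrite <- !sumN_scal, <- sumN_add. apply sumN_ext. intros. ring.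
Qed.

Lemma matvec_vadd N M x y i :
  matvec N M (vadd x y) i = matvec N M x i + matvec N M y i.
Proof. unfold matvec, vadd. rewrite <- sumN_add. apply sumN_ext. intros. ring. Qed.

Lemma dot_matvec_sym N M x y :
  symmetric N M -> dot N x (matvec N M y) = dot N y (matvec N M x).
Proof.
  intros HM. unfold dot, matvec.
  transitivity (sumN N (fun i => sumN N (fun j => x i * M i j * y j))).
  - apply sumN_ext. intros. rewrite <- sumN_scal. apply sumN_ext. intros. ring.
  - rewrite sumN_swap. apply sumN_ext. intros j Hj.
    rewrite <- sumN_scal. apply sumN_ext. intros i Hi.
    rewrite (HM i j) by assumption. ring.
Qed.

Lemma pos_def_nonneg N M x : pos_def N M -> 0 <= dot N x (matvec N M x).
Proof.
  intros HM. destruct (classic (exists i, (i < N)%nat /\ x i <> 0)) as [Hx|Hx].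
  - left. apply HM. exact Hx.
  - right. unfold dot. rewrite <- (sumN_zero N). apply sumN_ext. intros k Hk.
    destruct (Req_dec (x k) 0) as [E|E]; [rewrite E; ring|].
    exfalso. apply Hx. exists k. split; assumption.
Qed.

Lemma dot_Lhat N L z g :
  dot N g (matvec N (Lhat N L z) g)
  = dot N g (matvec N L g)
    - dot N g (matvec N L z) ^ 2 / dot N z (matvec N L z).
Proof.
  set (Lz := matvec N L z). set (d := dot N z Lz).
  rewrite (dot_extr N g _ (fun i => 1 * matvec N L g i + (- (dot N g Lz / d)) * Lz i)).
  - rewrite dot_linr. unfold Rdiv. ring.
  - intros i _. unfold matvec at 1, Lhat. fold Lz d.
    rewrite (sumN_ext N _ (fun j => 1 * (L i j * g j) + (- (Lz i / d)) * (Lz j * g j)))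
      by (intros; unfold Rdiv; ring).
    rewrite sumN_add, !sumN_scal.
    change (sumN N (fun j => Lz j * g j)) with (dot N Lz g).
    rewrite dot_comm. unfold matvec, Rdiv. ring.
Qed.

(* \hat L vanishes on z, so shifting an L-orthogonal vector along z does not
   change the value of its quadratic form. *)
Lemma dot_Lhat_shift N L z m g P :
  symmetric N L -> dot N z (matvec N L z) <> 0 ->
  dot N z (matvec N L m) = 0 ->
  (forall k, (k < N)%nat -> g k = m k - P * z k) ->
  dot N g (matvec N (Lhat N L z) g) = dot N m (matvec N L m).
Proof.
  intros HL Hd Hzm Hgm.
  assert (Hg : forall k, (k < N)%nat -> g k = 1 * m k + (- P) * z k)
    by (intros k Hk; rewrite Hgm by exact Hk; ring).
  assert (Hmz : dot N m (matvec N L z) = 0) by (rewrite dot_matvec_sym; assumption).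
  assert (HLg : dot N g (matvec N L g) = dot N m (matvec N L m) + P ^ 2 * dot N z (matvec N L z)).
  { assert (HLgi : forall i, matvec N L g i = 1 * matvec N L m i + (- P) * matvec N L z i).
    { intros i. rewrite (matvec_ext N L g _ i Hg). apply matvec_lin. }
    rewrite (dot_extl N g _ _ Hg), dot_linl, !(dot_extr N _ _ _ (fun i _ => HLgi i)),
      !dot_linr, Hmz, Hzm. ring. }
  assert (HLz : dot N g (matvec N L z) = - P * dot N z (matvec N L z)).
  { rewrite (dot_extl N g _ _ Hg), dot_linl, Hmz. ring. }
  rewrite dot_Lhat, HLg, HLz. field. exact Hd.
Qed.

Lemma derivable_pt_lim_sumN n (F : R -> nat -> R) dF t :
  (forall k, (k < n)%nat -> derivable_pt_lim (fun s => F s k) t (dF k)) ->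
  derivable_pt_lim (fun s => sumN n (F s)) t (sumN n dF).
Proof.
  induction n as [|n IH]; intros H; simpl.
  - apply derivable_pt_lim_const.
  - apply (derivable_pt_lim_plus (fun s => sumN n (F s)) (fun s => F s n)).
    + apply IH. intros. apply H. lia.
    + apply H. lia.
Qed.

Lemma derivable_pt_lim_const_on f C a b t l :
  a < t < b -> (forall s, a < s < b -> f s = C) ->
  derivable_pt_lim f t l -> l = 0.
Proof.
  intros Ht Hf Hl. apply (uniqueness_limite f t); [exact Hl|].
  intros eps Heps.
  assert (Hdelta : 0 < Rmin (t - a) (b - t)) by (apply Rmin_pos; lra).
  exists (mkposreal _ Hdelta). intros h Hh0 Hh. simpl in Hh.
  pose proof (Rmin_l (t - a) (b - t)). pose proof (Rmin_r (t - a) (b - t)).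
  apply Rabs_def2 in Hh.
  rewrite !Hf by lra. replace ((C - C) / h - 0) with 0 by (field; exact Hh0).
  rewrite Rabs_R0. exact Heps.
Qed.

Lemma derivable_pt_lim_entropy (f : R -> R) df t e r :
  0 < f t -> 0 < e -> derivable_pt_lim f t df ->
  derivable_pt_lim (fun s => f s * (ln (f s / e) - 1 + r) + e) t
    (df * (ln (f t / e) + r)).
Proof.
  intros Hf He H.
  assert (Hdiv : derivable_pt_lim (fun s => f s / e) t (df * / e + f t * 0)).
  { apply (derivable_pt_lim_mult f (fun _ => / e)); [exact H|apply derivable_pt_lim_const]. }
  assert (Hln : derivable_pt_lim (fun s => ln (f s / e)) t (/ (f t / e) * (df * / e + f t * 0))).
  { apply (derivable_pt_lim_comp (fun s => f s / e) ln); [exact Hdiv|].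
    apply derivable_pt_lim_ln. apply Rdiv_lt_0_compat; assumption. }
  assert (Hfull := derivable_pt_lim_plus _ _ t _ _
    (derivable_pt_lim_mult _ _ t _ _ H
      (derivable_pt_lim_plus _ _ t _ _
        (derivable_pt_lim_minus _ _ t _ _ Hln (derivable_pt_lim_const 1 t))
        (derivable_pt_lim_const r t)))
    (derivable_pt_lim_const e t)).
  simpl in Hfull.
  replace (df * (ln (f t / e) + r)) with
    (df * (ln (f t / e) - 1 + r)
     + f t * (/ (f t / e) * (df * / e + f t * 0) - 0 + 0) + 0); [exact Hfull|].
  field. split; lra.
Qed.

Lemma derivable_pt_lim_log_volume (v : R -> R) dv t A :
  0 < A -> 0 < v t -> derivable_pt_lim v t dv ->
  derivable_pt_lim (fun s => A * (ln (A / v s) - 1)) t (- A * dv / v t).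
Proof.
  intros HA Hv H.
  assert (Hdiv : derivable_pt_lim (fun s => A / v s) t ((0 * v t - dv * A) / (v t)²)).
  { apply (derivable_pt_lim_div (fun _ => A) v); [apply derivable_pt_lim_const|exact H|lra]. }
  assert (Hln : derivable_pt_lim (fun s => ln (A / v s)) t
                  (/ (A / v t) * ((0 * v t - dv * A) / (v t)²))).
  { apply (derivable_pt_lim_comp (fun s => A / v s) ln); [exact Hdiv|].
    apply derivable_pt_lim_ln. apply Rdiv_lt_0_compat; assumption. }
  assert (Hfull := derivable_pt_lim_mult _ _ t _ _ (derivable_pt_lim_const A t)
    (derivable_pt_lim_minus _ _ t _ _ Hln (derivable_pt_lim_const 1 t))).
  simpl in Hfull.
  replace (- A * dv / v t) with
    (0 * (ln (A / v t) - 1) + A * (/ (A / v t) * ((0 * v t - dv * A) / (v t)²) - 0));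
    [exact Hfull|].
  unfold Rsqr. field. split; lra.
Qed.

Lemma nonincreasing_of_derivative_nonpos f f' a b :
  (forall t, a < t < b -> derivable_pt_lim f t (f' t)) ->
  (forall t, a < t < b -> f' t <= 0) ->
  forall s t, a < s -> s <= t -> t < b -> f t <= f s.
Proof.
  intros Hf Hf' s t Hs Hst Ht.
  destruct (Rle_lt_or_eq_dec s t Hst) as [Hlt|<-]; [|lra].
  destruct (MVT_cor2 f f' s t Hlt) as [x [Ex Hx]].
  { intros x Hx. apply Hf. lra. }
  assert (Hneg : f' x * (t - s) <= 0).
  { rewrite <- (Rmult_0_l (t - s)). apply Rmult_le_compat_r; [lra|apply Hf'; lra]. }
  lra.
Qed.

(* Electroneutrality fixes the total charge [v * sum_k z_k c_k = - zv A] of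
   the cell, so the fluxes [J_k = (v c_k)'] carry no net charge. *)
Lemma charge_flux_zero N z zv A a b t (c : R -> nat -> R) (v : R -> R) J :
  a < t < b -> (forall s, a < s < b -> 0 < v s) ->
  (forall s, a < s < b -> sumN N (fun k => z k * c s k) + zv * A / v s = 0) ->
  (forall k, (k < N)%nat -> derivable_pt_lim (fun s => v s * c s k) t (J k)) ->
  dot N z J = 0.
Proof.
  intros Ht Hv Hneutral HJ.
  assert (Hcharge : derivable_pt_lim (fun s => sumN N (fun k => z k * (v s * c s k))) t
                      (sumN N (fun k => 0 * (v t * c t k) + z k * J k))).
  { apply (derivable_pt_lim_sumN N (fun s k => z k * (v s * c s k))). intros k Hk.
    apply (derivable_pt_lim_mult (fun _ => z k) (fun s => v s * c s k));
      [apply derivable_pt_lim_const|auto]. }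
  assert (Hconst : forall s, a < s < b -> sumN N (fun k => z k * (v s * c s k)) = - (zv * A)).
  { intros s Hs. specialize (Hneutral s Hs). specialize (Hv s Hs).
    rewrite (sumN_ext N _ (fun k => v s * (z k * c s k))) by (intros; ring).
    rewrite sumN_scal.
    replace (sumN N (fun k => z k * c s k)) with (- (zv * A / v s)) by lra.
    field. lra. }
  rewrite <- (derivable_pt_lim_const_on _ _ _ _ _ _ Ht Hconst Hcharge).
  apply sumN_ext. intros. ring.
Qed.

Lemma derivable_pt_lim_Gtilde N ce q A (c : R -> nat -> R) (v : R -> R) dc dv J t :
  0 < A -> (forall k, (k < N)%nat -> 0 < ce k) ->
  (forall k, (k < N)%nat -> 0 < c t k) -> 0 < v t ->
  (forall k, (k < N)%nat -> derivable_pt_lim (fun s => c s k) t (dc k)) ->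
  derivable_pt_lim v t dv ->
  (forall k, (k < N)%nat -> derivable_pt_lim (fun s => v s * c s k) t (J k)) ->
  derivable_pt_lim (fun s => Gtilde N ce q A (c s) (v s)) t
    (dot N J (vadd (gam ce (c t)) q) + dv * piw N ce (c t) A (v t)).
Proof.
  intros HA Hce Hc Hv Hdc Hdv HJ.
  set (g := fun k => ln (c t k / ce k) + q k).
  set (S := sumN N (fun k => c t k * (ln (c t k / ce k) - 1 + q k) + ce k)).
  assert (HG : derivable_pt_lim (fun s => Gtilde N ce q A (c s) (v s)) t
                 (dv * S + v t * sumN N (fun k => dc k * g k) + - A * dv / v t)).
  { apply derivable_pt_lim_plus; [|apply derivable_pt_lim_log_volume; assumption].
    apply (derivable_pt_lim_mult v (fun s => sumN N
             (fun k => c s k * (ln (c s k / ce k) - 1 + q k) + ce k))); [exact Hdv|].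
    apply (derivable_pt_lim_sumN N (fun s k => c s k * (ln (c s k / ce k) - 1 + q k) + ce k)).
    intros k Hk. apply (derivable_pt_lim_entropy (fun s => c s k)); auto. }
  assert (HJk : forall k, (k < N)%nat -> J k = dv * c t k + v t * dc k).
  { intros k Hk. apply (uniqueness_limite (fun s => v s * c s k) t); [auto|].
    apply (derivable_pt_lim_mult v (fun s => c s k)); auto. }
  assert (Hflux : dot N J (vadd (gam ce (c t)) q)
                  = dv * sumN N (fun k => c t k * g k) + v t * sumN N (fun k => dc k * g k)).
  { unfold dot. rewrite <- !sumN_scal, <- sumN_add. apply sumN_ext. intros k Hk.
    rewrite HJk by exact Hk. unfold vadd, gam, g. ring. }
  assert (HS : S = sumN N (fun k => c t k * g k) + (-1) * sumN N (c t) + sumN N ce).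
  { unfold S. rewrite <- sumN_scal, <- !sumN_add. apply sumN_ext. intros. unfold g. ring. }
  replace (dot N J (vadd (gam ce (c t)) q) + dv * piw N ce (c t) A (v t))
    with (dv * S + v t * sumN N (fun k => dc k * g k) + - A * dv / v t); [exact HG|].
  rewrite Hflux, HS. unfold piw. field. lra.
Qed.

Theorem lemma3
  (N : nat) (HN : (2 <= N)%nat)
  (z ce : nat -> R) (A zv : R) (L : nat -> nat -> R) (p q : nat -> R) (zeta : R)
  (Hz : exists k, (k < N)%nat /\ z k <> 0)
  (Hce : forall k, (k < N)%nat -> 0 < ce k)
  (Hneutral_e : sumN N (fun k => z k * ce k) = 0)
  (HA : 0 < A)
  (HLsym : symmetric N L) (HLpd : pos_def N L)
  (Hzeta : 0 < zeta)
  (Hq : forall i, (i < N)%nat -> matvec N L q i = p i)   (* q = L^{-1} p *)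
  (a b : R) (Hab : a < b)
  (c : R -> nat -> R) (v : R -> R) (phi : R -> R)
  (dc : R -> nat -> R) (dv : R -> R)
  (Hcpos : forall t, a < t < b -> forall k, (k < N)%nat -> 0 < c t k)
  (Hvpos : forall t, a < t < b -> 0 < v t)
  (Hdc : forall t, a < t < b -> forall k, (k < N)%nat ->
           derivable_pt_lim (fun s => c s k) t (dc t k))
  (Hdc_cont : forall t, a < t < b -> forall k, (k < N)%nat ->
           continuity_pt (fun s => dc s k) t)
  (Hdv : forall t, a < t < b -> derivable_pt_lim v t (dv t))
  (Hdv_cont : forall t, a < t < b -> continuity_pt dv t)
  (Hphi : forall t, a < t < b -> continuity_pt phi t)
  (Hflux : forall t, a < t < b -> forall k, (k < N)%nat ->
      derivable_pt_lim (fun s => v s * c s k) t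
        (- matvec N L (mu ce (c t) z (phi t)) k - p k))
  (Hneutral : forall t, a < t < b ->
      sumN N (fun k => z k * c t k) + zv * A / v t = 0)
  (Hwater : forall t, a < t < b ->
      dv t = - zeta * piw N ce (c t) A (v t)) :
  (forall t, a < t < b ->
     let m := vadd (mu ce (c t) z (phi t)) q in
     let g := vadd (gam ce (c t)) q in
     let pw := piw N ce (c t) A (v t) in
     derivable_pt_lim (fun s => Gtilde N ce q A (c s) (v s)) t
       (- (dot N m (matvec N L m) + zeta * pw ^ 2))
     /\ dot N m (matvec N L m) + zeta * pw ^ 2
        = dot N g (matvec N (Lhat N L z) g) + zeta * pw ^ 2)
  /\ (forall s t, a < s -> s <= t -> t < b ->
        Gtilde N ce q A (c t) (v t) <= Gtilde N ce q A (c s) (v s)).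
Proof.
  match goal with |- ?rate /\ _ => assert (Hrate : rate) end.
  { intros t Ht m g pw.
    set (J := fun k => - matvec N L (mu ce (c t) z (phi t)) k - p k).
    assert (HJ : forall k, (k < N)%nat -> J k = (-1) * matvec N L m k + 0 * z k).
    { intros k Hk. unfold J, m. rewrite matvec_vadd, Hq by exact Hk. ring. }
    assert (Hzm : dot N z (matvec N L m) = 0).
    { assert (Hcharge := charge_flux_zero N z zv A a b t c v J Ht Hvpos Hneutral (Hflux t Ht)).
      rewrite (dot_extr N z _ _ HJ), dot_linr in Hcharge. lra. }
    assert (Hg : forall k, (k < N)%nat -> g k = 1 * m k + (- phi t) * z k).
    { intros k _. unfold g, m, vadd, mu. ring. }
    split.
    - assert (Hdiss : dot N J g = - dot N m (matvec N L m)).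
      { rewrite (dot_extl N J _ _ HJ), dot_linl, (dot_extr N _ _ _ Hg), dot_linr,
          (dot_comm N _ z), Hzm, dot_comm. ring. }
      replace (- (dot N m (matvec N L m) + zeta * pw ^ 2))
        with (dot N J g + dv t * pw) by (rewrite Hdiss, Hwater by exact Ht; fold pw; ring).
      apply (derivable_pt_lim_Gtilde N ce q A c v (dc t) (dv t)); auto.
    - f_equal. symmetry. apply (dot_Lhat_shift N L z m g (phi t)); auto.
      + apply Rgt_not_eq, HLpd, Hz.
      + intros k Hk. rewrite Hg by exact Hk. ring. }
  split; [exact Hrate|].
  apply (nonincreasing_of_derivative_nonpos _ _ a b (fun t Ht => proj1 (Hrate t Ht))).
  intros t _.
  pose proof (pos_def_nonneg N L (vadd (mu ce (c t) z (phi t)) q) HLpd).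
  pose proof (Rmult_le_pos zeta _ (Rlt_le _ _ Hzeta) (pow2_ge_0 (piw N ce (c t) A (v t)))).
  lra.
Qed.
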